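(* For every finite sequence $\Gamma$ and formula $A$ of the $\nabla$-free language $\mathcal{L}=\{\wedge,\vee,\top,\bot,1,\otimes,\to\}$: $\Gamma\vdash_{\mathbf{FL}_l}A$ if and only if $\Gamma^{\nabla}\vdash_{\mathbf{STL}(N)}A^{\nabla}$.
   Context: Formulas of $\mathcal{L}_\nabla$ are built from variables and constants $1,\top,\bot$ by $\wedge,\vee,\otimes,\to$ and unary $\nabla$; $\mathcal{L}$ is the $\nabla$-free fragment. Sequents $\Gamma\Rightarrow A$ have $\Gamma$ a finite sequence; $\nabla\Gamma$ applies $\nabla$ to each member. $\mathbf{STL}$ has axioms $A\Rightarrow A$, $\Rightarrow1$, $\nabla1\Rightarrow1$, $\Gamma\Rightarrow\top$, $\Gamma,\bot,\Sigma\Rightarrow A$ and rules (premises / conclusion): cut: $\Gamma\Rightarrow A$, $\Pi,A,\Sigma\Rightarrow B$ / $\Pi,\Gamma,\Sigma\Rightarrow B$; $L\wedge$: $\Gamma,A,\Sigma\Rightarrow C$ / $\Gamma,A\wedge B,\Sigma\Rightarrow C$ and $\Gamma,B,\Sigma\Rightarrow C$ / $\Gamma,A\wedge B,\Sigma\Rightarrow C$; $R\wedge$: $\Gamma\Rightarrow A$, $\Gamma\Rightarrow B$ / $\Gamma\Rightarrow A\wedge B$; $L\vee$: $\Gamma,A,\Sigma\Rightarrow C$, $\Gamma,B,\Sigma\Rightarrow C$ / $\Gamma,A\vee B,\Sigma\Rightarrow C$; $R\vee$: $\Gamma\Rightarrow A$ / $\Gamma\Rightarrow A\vee B$ and $\Gamma\Rightarrow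 B$ / $\Gamma\Rightarrow A\vee B$; $L1$: $\Gamma,\Sigma\Rightarrow A$ / $\Gamma,1,\Sigma\Rightarrow A$; $L\otimes$: $\Gamma,A,B,\Sigma\Rightarrow C$ / $\Gamma,A\otimes B,\Sigma\Rightarrow C$; $R\otimes$: $\Gamma\Rightarrow A$, $\Sigma\Rightarrow B$ / $\Gamma,\Sigma\Rightarrow A\otimes B$; $(\nabla)$: $A\Rightarrow B$ / $\nabla A\Rightarrow\nabla B$; Oplax: $\nabla A,\nabla B\Rightarrow C$ / $\nabla(A\otimes B)\Rightarrow C$; $L\to$: $\Gamma\Rightarrow A$, $\Pi,B,\Sigma\Rightarrow C$ / $\Pi,\Gamma,\nabla(A\to B),\Sigma\Rightarrow C$; $R\to$: $A,\nabla\Gamma\Rightarrow B$ / $\Gamma\Rightarrow A\to B$. Schemes: $(N)$: $\Gamma\Rightarrow A$ / $\nabla\Gamma\Rightarrow\nabla A$; $(P)$: $\Gamma\Rightarrow\nabla A$ / $\Gamma\Rightarrow A$; $(F)$: $\Gamma\Rightarrow A$ / $\Gamma\Rightarrow\nabla A$. $\mathbf{STL}(N)$ is $\mathbf{STL}$ plus $(N)$, and $\mathbf{FL}_l$ is $\mathbf{STL}$ plus $(P)$ and $(F)$. Writing $\Box A$ for $1\to A$, the translation $(-)^\nabla:\mathcal{L}\to\mathcal{L}_\nabla$ is: $p^\nabla=\nabla\Box p$ for variables $p$, $\bot^\nabla=\bot$, $\top^\nabla=\nabla\Box\top$, $1^\nabla=1$, $(A\wedge B)^\nabla=\nabla\Box(A^\nabla\wedge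 B^\nabla)$, $(A\vee B)^\nabla=A^\nabla\vee B^\nabla$, $(A\otimes B)^\nabla=A^\nabla\otimes B^\nabla$, $(A\to B)^\nabla=\nabla(A^\nabla\to B^\nabla)$; $\Gamma^\nabla$ translates each member of $\Gamma$. *)

From Stdlib Require Import List.
Import ListNotations.

Inductive formula : Type :=
| Var : nat -> formula
| One : formula
| Top : formula
| Bot : formula
| And : formula -> formula -> formula
| Or : formula -> formula -> formula
| Tens : formula -> formula -> formula
| Imp : formula -> formula -> formula
| Nab : formula -> formula.

Fixpoint nabla_free (A : formula) : Prop :=
  match A with
  | Var _ | One | Top | Bot => True
  | And A B | Or A B | Tens A B | Imp A B => nabla_free A /\ nabla_free B
  | Nab _ => False
  end.

Definition nablaL (G : list formula) : list formula := map Nab G.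

Record schemes : Type := { useN : bool; useP : bool; useF : bool }.

Definition STL_N : schemes := {| useN := true; useP := false; useF := false |}.
Definition FL_l : schemes := {| useN := false; useP := true; useF := true |}.

Inductive derivable (S : schemes) : list formula -> formula -> Prop :=
| ax_id : forall A, derivable S [A] A
| ax_one : derivable S [] One
| ax_nab_one : derivable S [Nab One] One
| ax_top : forall G, derivable S G Top
| ax_bot : forall G Sg A, derivable S (G ++ Bot :: Sg) A
| r_cut : forall G Pi Sg A B,
    derivable S G A -> derivable S (Pi ++ A :: Sg) B ->
    derivable S (Pi ++ G ++ Sg) B
| r_andL1 : forall G Sg A B C,
    derivable S (G ++ A :: Sg) C -> derivable S (G ++ And A B :: Sg) C
| r_andL2 : forall G Sg A B C,
    derivable S (G ++ B :: Sg) C -> derivable S (G ++ And A B :: Sg) C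
| r_andR : forall G A B,
    derivable S G A -> derivable S G B -> derivable S G (And A B)
| r_orL : forall G Sg A B C,
    derivable S (G ++ A :: Sg) C -> derivable S (G ++ B :: Sg) C ->
    derivable S (G ++ Or A B :: Sg) C
| r_orR1 : forall G A B, derivable S G A -> derivable S G (Or A B)
| r_orR2 : forall G A B, derivable S G B -> derivable S G (Or A B)
| r_oneL : forall G Sg A,
    derivable S (G ++ Sg) A -> derivable S (G ++ One :: Sg) A
| r_tensL : forall G Sg A B C,
    derivable S (G ++ A :: B :: Sg) C -> derivable S (G ++ Tens A B :: Sg) C
| r_tensR : forall G Sg A B,
    derivable S G A -> derivable S Sg B -> derivable S (G ++ Sg) (Tens A B)
| r_nab : forall A B,
    derivable S [A] B -> derivable S [Nab A] (Nab B)
| r_oplax : forall A B C,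
    derivable S [Nab A; Nab B] C -> derivable S [Nab (Tens A B)] C
| r_impL : forall G Pi Sg A B C,
    derivable S G A -> derivable S (Pi ++ B :: Sg) C ->
    derivable S (Pi ++ G ++ Nab (Imp A B) :: Sg) C
| r_impR : forall G A B,
    derivable S (A :: nablaL G) B -> derivable S G (Imp A B)
| r_N : forall G A, useN S = true ->
    derivable S G A -> derivable S (nablaL G) (Nab A)
| r_P : forall G A, useP S = true ->
    derivable S G (Nab A) -> derivable S G A
| r_F : forall G A, useF S = true ->
    derivable S G A -> derivable S G (Nab A).

Definition Box (A : formula) : formula := Imp One A.

(* The translation (-)^nabla : L -> L_nabla (applied to all formulas; on the
   nabla-free fragment it is the paper's translation). *)
Fixpoint trans (A : formula) : formula :=
  match A with
  | Var p => Nab (Box (Var p))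
  | Bot => Bot
  | Top => Nab (Box Top)
  | One => One
  | And A B => Nab (Box (And (trans A) (trans B)))
  | Or A B => Or (trans A) (trans B)
  | Tens A B => Tens (trans A) (trans B)
  | Imp A B => Nab (Imp (trans A) (trans B))
  | Nab A => Nab (trans A)  (* irrelevant: never used on L *)
  end.

Definition transL (G : list formula) : list formula := map trans G.

From Stdlib Require Import List.
Import ListNotations.

(* Forward direction: in FL_l the rules (P) and (F) make nabla A and A
   interderivable, so an FL_l derivation is interpreted in STL(N) through the
   translation extended by nabla A |-> A^nabla.  Every translated formula X is
   stable, i.e. X => nabla Box X, and stability lets (N) promote a sequent
   Box Gamma => Z to Gamma => nabla Z; this is what the right rules for top,
   /\ and -> need, since their translations are guarded by nabla.
   Backward direction: erasing every nabla sends STL(N) derivations to FL_l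
   derivations, the nabla's of (L->) and (R->) being supplied by (F) and (P),
   and FL_l proves A <=> erase (A^nabla) because Box A <=> A there. *)

Section Structural.
Variable S : schemes.

Definition derivable_pw (G D : list formula) : Prop :=
  Forall2 (fun X Y => derivable S [X] Y) G D.

Lemma cut_hyp X Y Pi Sg C :
  derivable S [X] Y -> derivable S (Pi ++ Y :: Sg) C ->
  derivable S (Pi ++ X :: Sg) C.
Proof. exact (r_cut S [X] Pi Sg Y C). Qed.

Lemma cut_concl G X Y :
  derivable S G X -> derivable S [X] Y -> derivable S G Y.
Proof.
  intros HX HY. pose proof (r_cut S G [] [] X Y HX HY) as H.
  simpl in H. rewrite app_nil_r in H. exact H.
Qed.

Lemma cut_pw_in G D : derivable_pw G D ->
  forall Pi Sg C, derivable S (Pi ++ D ++ Sg) C -> derivable S (Pi ++ G ++ Sg) C.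
Proof.
  induction 1 as [|X Y G D HXY _ IH]; intros Pi Sg C H; simpl in *; auto.
  apply (cut_hyp X Y) in H; auto.
  replace (Pi ++ X :: G ++ Sg) with ((Pi ++ [X]) ++ G ++ Sg)
    by (rewrite <- app_assoc; reflexivity).
  apply IH. rewrite <- app_assoc. exact H.
Qed.

Lemma cut_pw G D C : derivable_pw G D -> derivable S D C -> derivable S G C.
Proof.
  intros HGD H. pose proof (cut_pw_in G D HGD [] [] C) as K.
  rewrite !app_nil_r in K. auto.
Qed.

Lemma derivable_pw_cons_id A G D :
  derivable_pw G D -> derivable_pw (A :: G) (A :: D).
Proof. constructor; [apply ax_id | assumption]. Qed.

Lemma derivable_pw_map_l (f : formula -> formula) G :
  (forall X, In X G -> derivable S [f X] X) -> derivable_pw (map f G) G.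
Proof. unfold derivable_pw; induction G; simpl; intros H; constructor; auto. Qed.

Lemma derivable_pw_map_r (f : formula -> formula) G :
  (forall X, In X G -> derivable S [X] (f X)) -> derivable_pw G (map f G).
Proof. unfold derivable_pw; induction G; simpl; intros H; constructor; auto. Qed.

Lemma nab_box_elim X : derivable S [Nab (Box X)] X.
Proof. exact (r_impL S [] [] [] One X X (ax_one S) (ax_id S X)). Qed.

Lemma box_intro G X : derivable S (nablaL G) X -> derivable S G (Box X).
Proof. intros H. apply r_impR. exact (r_oneL S [] _ _ H). Qed.

Lemma derivable_pw_nab_box G : derivable_pw (nablaL (map Box G)) G.
Proof.
  unfold nablaL. rewrite map_map.
  apply (derivable_pw_map_l (fun X => Nab (Box X))).
  intros; apply nab_box_elim.
Qed.

Lemma derivable_nab_box_ctx G X :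
  derivable S G X -> derivable S (nablaL (map Box G)) X.
Proof. apply cut_pw, derivable_pw_nab_box. Qed.

End Structural.

Definition box_stable (S : schemes) (X : formula) : Prop :=
  derivable S [X] (Nab (Box X)).

Section Stability.
Variable S : schemes.
Hypothesis useN_S : useN S = true.

Lemma box_stable_nab X : box_stable S (Nab X).
Proof. apply r_nab, box_intro, ax_id. Qed.

Lemma box_stable_bot : box_stable S Bot.
Proof. exact (ax_bot S [] [] _). Qed.

Lemma box_stable_one : box_stable S One.
Proof.
  apply (r_oneL S [] []), (r_N S [] _ useN_S), box_intro, ax_one.
Qed.

Lemma box_stable_or X Y :
  box_stable S X -> box_stable S Y -> box_stable S (Or X Y).
Proof.
  intros HX HY. apply (r_orL S [] []); simpl.
  - eapply cut_concl; [exact HX |].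
    apply r_nab, box_intro, r_orR1, nab_box_elim.
  - eapply cut_concl; [exact HY |].
    apply r_nab, box_intro, r_orR2, nab_box_elim.
Qed.

Lemma box_stable_tens X Y :
  box_stable S X -> box_stable S Y -> box_stable S (Tens X Y).
Proof.
  intros HX HY. apply (r_tensL S [] []); simpl.
  apply (cut_pw S _ [Nab (Box X); Nab (Box Y)]).
  { constructor; [exact HX | constructor; [exact HY | constructor]]. }
  apply (r_N S [Box X; Box Y] _ useN_S), box_intro.
  apply (r_tensR S [Nab (Box X)] [Nab (Box Y)]); apply nab_box_elim.
Qed.

Lemma promotion G Z : Forall (box_stable S) G ->
  derivable S (map Box G) Z -> derivable S G (Nab Z).
Proof.
  intros HG H. apply (r_N S _ _ useN_S) in H.
  unfold nablaL in H. rewrite map_map in H.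
  apply (cut_pw S _ _ _ (derivable_pw_map_r S (fun X => Nab (Box X)) G
    (proj1 (Forall_forall _ G) HG))).
  exact H.
Qed.

End Stability.

(* Dropping nabla makes the rules (P), (F) and (N) hold trivially under this
   translation. *)
Fixpoint trans_flat (A : formula) : formula :=
  match A with
  | Var p => Nab (Box (Var p))
  | Bot => Bot
  | Top => Nab (Box Top)
  | One => One
  | And A B => Nab (Box (And (trans_flat A) (trans_flat B)))
  | Or A B => Or (trans_flat A) (trans_flat B)
  | Tens A B => Tens (trans_flat A) (trans_flat B)
  | Imp A B => Nab (Imp (trans_flat A) (trans_flat B))
  | Nab A => trans_flat A
  end.

Lemma trans_flat_nabla_free A : nabla_free A -> trans_flat A = trans A.
Proof.
  induction A; simpl; intros H; try tauto;
    destruct H; rewrite IHA1, IHA2; auto.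
Qed.

Lemma map_trans_flat_nabla_free G :
  Forall nabla_free G -> map trans_flat G = transL G.
Proof.
  intros HG. apply map_ext_in. intros X HX.
  apply trans_flat_nabla_free, (proj1 (Forall_forall _ G) HG), HX.
Qed.

Lemma map_trans_flat_nablaL G : map trans_flat (nablaL G) = map trans_flat G.
Proof. unfold nablaL. rewrite map_map. reflexivity. Qed.

Section Translation.
Variable S : schemes.
Hypothesis useN_S : useN S = true.

Lemma box_stable_trans_flat A : box_stable S (trans_flat A).
Proof.
  induction A; simpl; auto using box_stable_nab, box_stable_one,
    box_stable_bot, box_stable_or, box_stable_tens.
Qed.

Lemma box_stable_map_trans_flat G : Forall (box_stable S) (map trans_flat G).
Proof.
  apply Forall_forall. intros X HX. apply in_map_iff in HX.
  destruct HX as [A [<- _]]. apply box_stable_trans_flat.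
Qed.

Lemma promotion_trans_flat G Z :
  derivable S (map Box (map trans_flat G)) Z ->
  derivable S (map trans_flat G) (Nab Z).
Proof. apply promotion, box_stable_map_trans_flat; assumption. Qed.

Lemma trans_flat_derivable S' G A : derivable S' G A ->
  derivable S (map trans_flat G) (trans_flat A).
Proof.
  induction 1; simpl in *; repeat rewrite map_app in *; simpl in *.
  - apply ax_id.
  - apply ax_one.
  - apply ax_id.
  - apply promotion_trans_flat, box_intro, ax_top.
  - apply ax_bot.
  - eapply r_cut; eassumption.
  - eapply cut_hyp; [| eassumption].
    eapply cut_concl; [apply nab_box_elim | apply (r_andL1 S [] []), ax_id].
  - eapply cut_hyp; [| eassumption].
    eapply cut_concl; [apply nab_box_elim | apply (r_andL2 S [] []), ax_id].
  - apply promotion_trans_flat, box_intro.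
    apply r_andR; apply derivable_nab_box_ctx; assumption.
  - apply r_orL; assumption.
  - apply r_orR1; assumption.
  - apply r_orR2; assumption.
  - apply r_oneL; assumption.
  - apply r_tensL; assumption.
  - apply r_tensR; assumption.
  - assumption.
  - apply (r_tensL S [] []); assumption.
  - apply r_impL; assumption.
  - rewrite map_trans_flat_nablaL in IHderivable.
    apply promotion_trans_flat, r_impR.
    apply (cut_pw S _ (trans_flat A :: map trans_flat G)); [| assumption].
    apply derivable_pw_cons_id, derivable_pw_nab_box.
  - rewrite map_trans_flat_nablaL. assumption.
  - assumption.
  - assumption.
Qed.

End Translation.

Fixpoint erase (A : formula) : formula :=
  match A with
  | Var p => Var p
  | Bot => Bot
  | Top => Top
  | One => One
  | And A B => And (erase A) (erase B)
  | Or A B => Or (erase A) (erase B)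
  | Tens A B => Tens (erase A) (erase B)
  | Imp A B => Imp (erase A) (erase B)
  | Nab A => erase A
  end.

Lemma map_erase_nablaL G : map erase (nablaL G) = map erase G.
Proof. unfold nablaL. rewrite map_map. reflexivity. Qed.

Section Erasure.
Variable T : schemes.
Hypothesis useP_T : useP T = true.
Hypothesis useF_T : useF T = true.

Lemma nab_elim X : derivable T [Nab X] X.
Proof. apply r_P, ax_id; assumption. Qed.

Lemma nab_intro X : derivable T [X] (Nab X).
Proof. apply r_F, ax_id; assumption. Qed.

Lemma derivable_pw_nab G : derivable_pw T (nablaL G) G.
Proof. apply derivable_pw_map_l. intros; apply nab_elim. Qed.

Lemma box_elim X : derivable T [Box X] X.
Proof. eapply cut_concl; [apply nab_intro | apply nab_box_elim]. Qed.

Lemma box_intro_self X : derivable T [X] (Box X).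
Proof. apply box_intro, nab_elim. Qed.

Lemma erase_derivable S G A : derivable S G A ->
  derivable T (map erase G) (erase A).
Proof.
  induction 1; simpl in *; repeat rewrite map_app in *; simpl in *.
  - apply ax_id.
  - apply ax_one.
  - apply ax_id.
  - apply ax_top.
  - apply ax_bot.
  - eapply r_cut; eassumption.
  - apply r_andL1; assumption.
  - apply r_andL2; assumption.
  - apply r_andR; assumption.
  - apply r_orL; assumption.
  - apply r_orR1; assumption.
  - apply r_orR2; assumption.
  - apply r_oneL; assumption.
  - apply r_tensL; assumption.
  - apply r_tensR; assumption.
  - assumption.
  - apply (r_tensL T [] []); assumption.
  - rewrite app_assoc. apply (cut_hyp T _ (Nab (Imp (erase A) (erase B)))).
    + apply nab_intro.
    + rewrite <- app_assoc. apply r_impL; assumption.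
  - rewrite map_erase_nablaL in IHderivable. apply r_impR.
    apply (cut_pw T _ (erase A :: map erase G)); [| assumption].
    apply derivable_pw_cons_id, derivable_pw_nab.
  - rewrite map_erase_nablaL. assumption.
  - assumption.
  - assumption.
Qed.

Lemma erase_trans_equiv A :
  derivable T [A] (erase (trans A)) /\ derivable T [erase (trans A)] A.
Proof.
  induction A as [| | | |A1 [a1 a2] A2 [b1 b2] |A1 [a1 a2] A2 [b1 b2]
    |A1 [a1 a2] A2 [b1 b2] |A1 [a1 a2] A2 [b1 b2] |A [a1 a2]]; simpl.
  - split; [apply box_intro_self | apply box_elim].
  - split; apply ax_id.
  - split; [apply box_intro_self | apply box_elim].
  - split; apply ax_id.
  - split.
    + eapply cut_concl; [| apply box_intro_self].
      apply r_andR; [apply (r_andL1 T [] []) | apply (r_andL2 T [] [])]; auto.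
    + eapply cut_concl; [apply box_elim |].
      apply r_andR; [apply (r_andL1 T [] []) | apply (r_andL2 T [] [])]; auto.
  - split; apply (r_orL T [] []); simpl;
      [apply r_orR1 | apply r_orR2 | apply r_orR1 | apply r_orR2]; auto.
  - split; apply (r_tensL T [] []); simpl; apply (r_tensR T [_] [_]); auto.
  - split; apply r_impR; simpl.
    + exact (r_impL T [_] [] [] _ _ _ a2 b1).
    + exact (r_impL T [_] [] [] _ _ _ a1 b2).
  - split.
    + eapply cut_concl; [apply nab_elim | exact a1].
    + eapply cut_concl; [exact a2 | apply nab_intro].
Qed.

End Erasure.

Theorem theorem7p14 (G : list formula) (A : formula) :
  Forall nabla_free G -> nabla_free A ->
  (derivable FL_l G A <-> derivable STL_N (transL G) (trans A)).
Proof.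
  intros HG HA. split; intros H.
  - apply (trans_flat_derivable STL_N eq_refl) in H.
    rewrite (map_trans_flat_nabla_free G HG), (trans_flat_nabla_free A HA) in H.
    exact H.
  - apply (erase_derivable FL_l eq_refl eq_refl) in H.
    eapply cut_concl; [| apply (erase_trans_equiv FL_l eq_refl eq_refl A)].
    apply (cut_pw FL_l _ (map erase (transL G))); [| exact H].
    unfold transL. rewrite map_map.
    apply (derivable_pw_map_r FL_l (fun X => erase (trans X))).
    intros X _. apply (erase_trans_equiv FL_l eq_refl eq_refl X).
Qed.
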